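(* For all $k>0$, all powers of $x$ that appear in $T_2,T_3,\dots,T_{k+1}$ (written as polynomials in $x$ and $y$ with coefficients in $k$ via the recursive construction) are multiples of $d_k=\gcd(p_1,\dots,p_k)$.
   Context: Setting: $k$ (the base field) is algebraically closed of characteristic $0$; $\nu^*$ is a $k$-valuation of a function field $K^*$ of transcendence degree $2$ with valuation ring $V^*$, value group a subgroup of $\mathbb{Q}$ and residue field $k$; $S$ is an algebraic two-dimensional regular local ring with quotient field $K^*$ dominated by $V^*$, with regular parameters $(x,y)$, and $\nu^*(x)=1$. Jumping polynomials: $T_0=x$, $T_1=y$, $q_0=\infty$, $p_1,q_1$ coprime positive integers with $\nu^*(y)=p_1/q_1$; for $i\ge1$, $n_{i,j}$ ($0\le j<i$) are nonnegative integers with $n_{i,j}<q_j$ and $q_i\nu^*(T_i)=\sum_{j<i}n_{i,j}\nu^*(T_j)$, $\lambda_i\in k$ is the residue of $T_i^{q_i}/\prod_{j<i}T_j^{n_{i,j}}$, $T_{i+1}=T_i^{q_i}-\lambda_i\prod_{j<i}T_j^{n_{i,j}}$, and $p_{i+1},q_{i+1}$ are coprime positive integers with $\nu^*(T_{i+1})=q_i\nu^*(T_i)+\frac{1}{q_1\cdots q_i}\frac{p_{i+1}}{q_{i+1}}$. *)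

From HB Require Import structures.
From mathcomp Require Import all_boot all_order all_algebra.
Set Implicit Arguments. Unset Strict Implicit. Unset Printing Implicit Defensive.
Import Order.TTheory GRing.Theory Num.Theory.
Local Open Scope ring_scope.

(* Bivariate polynomials over K: an element of {poly {poly K}} is
   sum_b c_b(x) y^b; the outer variable is y, the inner one is x. *)
Section Jumping.
Variable K : fieldType.

Definition varx : {poly {poly K}} := ('X)%:P.
Definition vary : {poly {poly K}} := 'X.

Fixpoint jseq (q : nat -> nat) (n : nat -> nat -> nat) (lam : nat -> K)
    (m : nat) : seq {poly {poly K}} :=
  match m with
  | 0 => [:: varx]
  | S m' =>
      let s := jseq q n lam m' in
      rcons s (if m' is 0 then vary
               else nth 0 s m' ^+ q m'
                    - (lam m')%:P%:P * \prod_(j < m') nth 0 s j ^+ n m' j)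
  end.

Definition jpoly q n lam (i : nat) : {poly {poly K}} := nth 0 (jseq q n lam i) i.
End Jumping.

(* beta i = nu^*(T_i), as forced by the data: beta 0 = nu(x) = 1,
   beta 1 = p_1/q_1, beta (i+1) = q_i beta_i + (1/(q_1...q_i)) (p_{i+1}/q_{i+1}). *)
Fixpoint jbeta (p q : nat -> nat) (i : nat) : rat :=
  match i with
  | 0 => 1
  | S i' =>
      if i' is 0 then (p 1)%:R / (q 1)%:R
      else (q i')%:R * jbeta p q i'
           + (p i)%:R / ((q i)%:R * (\prod_(1 <= j < i) q j)%N%:R)
  end.

Definition occurs_x_pow (K : fieldType) (T : {poly {poly K}}) (a : nat) :=
  exists b, (T`_b)`_a != 0.

(* Let d = gcd(p_1, ..., p_k). Clearing denominators, (q_1 ... q_j) nu(T_j) is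
   an integer N_j, divisible by d for j >= 1, while d is coprime to every q_j.
   Multiplying q_m nu(T_m) = sum_j n_{m,j} nu(T_j) by q_1 ... q_{m-1} thus shows
   d | n_{m,0}, the exponent of T_0 = x in the recursion. Polynomials in x^d
   and y form a subring containing y and all x^{n_{m,0}}, hence all T_m. *)
From HB Require Import structures.
From mathcomp Require Import all_boot all_order all_algebra.
From mathcomp Require Import ring.
Set Implicit Arguments. Unset Strict Implicit.
Import Order.TTheory GRing.Theory Num.Theory.
Local Open Scope ring_scope.

Lemma biggcdn_nat_dvd (F : nat -> nat) m n l : (m <= l < n)%N ->
  (\big[gcdn/0%N]_(m <= i < n) F i %| F l)%N.
Proof.
case/andP=> le_ml lt_ln; rewrite (big_cat_nat le_ml (ltnW lt_ln)) /=.
rewrite [X in gcdn _ X]big_ltn //.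
exact: dvdn_trans (dvdn_gcdr _ _) (dvdn_gcdl _ _).
Qed.

Section PolyInXn.
Variables (R : nzRingType) (d : nat).

Definition poly_in_Xn : pred {poly R} :=
  fun p => [forall i : 'I_(size p), (d %| i)%N || (p`_i == 0)].

Lemma poly_in_XnP (p : {poly R}) :
  reflect (forall i, ~~ (d %| i)%N -> p`_i = 0) (p \in poly_in_Xn).
Proof.
apply: (iffP forallP) => [Hp i ndi | Hp i].
  have [lt_ip | le_pi] := ltnP i (size p); last exact: nth_default.
  by have /orP[di | /eqP //] := Hp (Ordinal lt_ip); rewrite di in ndi.
by case: (boolP (d %| i)%N) => //= /Hp ->.
Qed.

Lemma poly_in_XnC c : c%:P \in poly_in_Xn.
Proof.
by apply/poly_in_XnP => i; rewrite coefC; case: eqP => // ->; rewrite dvdn0.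
Qed.

Lemma poly_in_Xn_subring_closed : subring_closed poly_in_Xn.
Proof.
split.
- by rewrite -polyC1 poly_in_XnC.
- move=> p r /poly_in_XnP Hp /poly_in_XnP Hr; apply/poly_in_XnP => i ndi.
  by rewrite coefB Hp ?Hr ?subr0.
move=> p r /poly_in_XnP Hp /poly_in_XnP Hr; apply/poly_in_XnP => i ndi.
rewrite coefM big1 // => -[j /=]; rewrite ltnS => le_ji _.
have [dj | ndj] := boolP (d %| j)%N; last by rewrite Hp ?mul0r.
rewrite Hr ?mulr0 //; apply: contra ndi => dij.
by rewrite -(subnKC le_ji) dvdn_add.
Qed.

HB.instance Definition _ :=
  GRing.isSubringClosed.Build {poly R} poly_in_Xn poly_in_Xn_subring_closed.

Lemma poly_in_XnXn m : (d %| m)%N -> 'X^m \in poly_in_Xn.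
Proof.
move=> dm; apply/poly_in_XnP => i.
by rewrite coefXn; case: eqP => // ->; rewrite dm.
Qed.

End PolyInXn.

Section JumpingPolynomials.
Variables (K : fieldType) (q : nat -> nat) (n : nat -> nat -> nat) (lam : nat -> K).

Lemma size_jseq m : size (jseq q n lam m) = m.+1.
Proof. by elim: m => //= m IH; rewrite size_rcons IH. Qed.

Lemma nth_jseq m i : (i <= m)%N -> nth 0 (jseq q n lam m) i = jpoly q n lam i.
Proof.
elim: m => [|m IH]; first by rewrite leqn0 => /eqP ->.
rewrite leq_eqVlt => /orP[/eqP -> // | ]; rewrite ltnS => le_im.
by rewrite /= nth_rcons size_jseq ltnS le_im IH.
Qed.

Lemma jpolyS m : jpoly q n lam m.+1 =
  if m is 0 then vary K
  else jpoly q n lam m ^+ q m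
       - (lam m)%:P%:P * \prod_(j < m) jpoly q n lam j ^+ n m j.
Proof.
rewrite /jpoly /= nth_rcons size_jseq ltnn eqxx.
case: m => // m; rewrite nth_jseq //; congr (_ - _ * _).
by apply: eq_bigr => j _; rewrite nth_jseq // ltnW.
Qed.

Lemma jpoly_in_subring (S : subringClosed {poly {poly K}}) (k : nat) :
    vary K \in S -> (forall c, c%:P%:P \in S) ->
    (forall m, (1 <= m <= k)%N -> varx K ^+ n m 0 \in S) ->
  forall m, (1 <= m <= k.+1)%N -> jpoly q n lam m \in S.
Proof.
move=> Sy SC Sx; elim/ltn_ind => -[// | m] IH /andP[_ le_mk]; rewrite jpolyS.
case: m IH le_mk => [|m] IH le_mk //.
have IH' j : (1 <= j <= m.+1)%N -> jpoly q n lam j \in S.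
  case/andP=> j_gt0 le_jm; apply: IH; first by rewrite ltnS.
  by rewrite j_gt0 (leq_trans le_jm (ltnW le_mk)).
rewrite rpredB ?rpredX ?IH' ?leqnn // rpredM //.
apply: rpred_prod => -[[|j] /= lt_jm] _; last exact/rpredX/IH'/ltnW.
by rewrite /jpoly /= Sx // le_mk.
Qed.

End JumpingPolynomials.

Lemma jpoly_polyOver_in_Xn (K : fieldType) q n (lam : nat -> K) (d k : nat) :
    (forall m, (1 <= m <= k)%N -> (d %| n m 0)%N) ->
  forall m, (1 <= m <= k.+1)%N -> jpoly q n lam m \is a polyOver (poly_in_Xn d).
Proof.
move=> dn0 m hm.
(* The subring structure is carried by [polyOver_pred], not by the qualifier. *)
pose S := GRing.SubringClosed.clone _ (polyOver_pred (@poly_in_Xn K d)) _.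
apply: (jpoly_in_subring q lam (S := S) _ _ _ hm).
- by rewrite /vary polyOverX.
- by move=> c; rewrite polyOverC poly_in_XnC.
by move=> l hl; rewrite /varx -rmorphXn polyOverC poly_in_XnXn ?dn0.
Qed.

Section ValueArithmetic.
Variables (p q : nat -> nat) (k : nat).
Hypothesis q_gt0 : forall l, (1 <= l <= k)%N -> (0 < q l)%N.

Definition qprod t := (\prod_(1 <= l < t.+1) q l)%N.

Fixpoint jnum j : nat :=
  match j with
  | 0 => 1
  | j'.+1 => if j' is 0 then p 1 else q j' * jnum j' * q j + p j
  end.

Lemma qprod_gt0 t : (t <= k)%N -> (0 < qprod t)%N.
Proof.
move=> le_tk; rewrite /qprod big_nat_cond prodn_cond_gt0 // => l.
case/andP=> /andP[l_gt0 lt_lt1] _.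
by rewrite q_gt0 // l_gt0 -ltnS (leq_trans lt_lt1).
Qed.

Lemma jbeta_qprod j : (j <= k)%N -> jbeta p q j * (qprod j)%:R = (jnum j)%:R.
Proof.
elim: j => [|[|j] IH] le_jk; first by rewrite /qprod big_geq.
  have q1 : (q 1)%:R != 0 :> rat by rewrite pnatr_eq0 -lt0n q_gt0 ?le_jk.
  by rewrite /qprod big_nat1 /= mulfVK.
have qj2 : (q j.+2)%:R != 0 :> rat by rewrite pnatr_eq0 -lt0n q_gt0 ?le_jk.
have qpj1 : (qprod j.+1)%:R != 0 :> rat.
  by rewrite pnatr_eq0 -lt0n qprod_gt0 // (ltnW le_jk).
have -> : qprod j.+2 = (qprod j.+1 * q j.+2)%N by rewrite /qprod big_nat_recr.
have -> : jbeta p q j.+2 = (q j.+1)%:R * jbeta p q j.+1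
    + (p j.+2)%:R / ((q j.+2)%:R * (qprod j.+1)%:R) by [].
have -> : jnum j.+2 = (q j.+1 * jnum j.+1 * q j.+2 + p j.+2)%N by [].
rewrite natrD !natrM -(IH (ltnW le_jk)).
by field; rewrite qpj1 qj2.
Qed.

Lemma jbeta_qprod_le j t : (j <= t <= k)%N ->
  jbeta p q j * (qprod t)%:R = (jnum j * \prod_(j.+1 <= l < t.+1) q l)%N%:R.
Proof.
case/andP=> le_jt le_tk; rewrite /qprod (@big_cat_nat _ _ _ j.+1) //=.
by rewrite natrM mulrA jbeta_qprod ?natrM // (leq_trans le_jt).
Qed.

Lemma jnum_eq_sum (n : nat -> nat) t : (t < k)%N ->
    (q t.+1)%:R * jbeta p q t.+1 = \sum_(j < t.+1) (n j)%:R * jbeta p q j ->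
  jnum t.+1 = (\sum_(j < t.+1) n j * (jnum j * \prod_(j.+1 <= l < t.+1) q l))%N.
Proof.
move=> lt_tk E; apply/eqP; rewrite -(eqr_nat rat) -jbeta_qprod // natr_sum.
have -> : qprod t.+1 = (q t.+1 * qprod t)%N by rewrite /qprod big_nat_recr //= mulnC.
rewrite natrM mulrA [jbeta _ _ _ * _]mulrC E mulr_suml; apply/eqP/eq_bigr => j _.
by rewrite -mulrA jbeta_qprod_le ?natrM // -ltnS ltn_ord (ltnW lt_tk).
Qed.

Variable d : nat.
Hypothesis dvd_p : forall l, (1 <= l <= k)%N -> (d %| p l)%N.
Hypothesis coprime_q : forall l, (1 <= l <= k)%N -> coprime d (q l).

Lemma dvdn_jnum j : (1 <= j <= k)%N -> (d %| jnum j)%N.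
Proof.
elim: j => // -[_ | j IH] /andP[_ le_jk]; first exact: dvd_p.
by rewrite dvdn_add ?dvd_p ?le_jk // dvdn_mulr // dvdn_mull // (IH (ltnW le_jk)).
Qed.

Lemma coprime_qprod t : (t <= k)%N -> coprime d (qprod t).
Proof.
move=> le_tk; rewrite /qprod big_nat_cond; elim/big_ind: _ => [| a b | l].
- exact: coprimen1.
- by rewrite coprimeMr => -> ->.
case/andP=> /andP[l_gt0 lt_lt1] _; apply: coprime_q.
by rewrite l_gt0 -ltnS (leq_trans lt_lt1).
Qed.

Lemma dvdn_x_exponent (n : nat -> nat) t : (t < k)%N ->
    (q t.+1)%:R * jbeta p q t.+1 = \sum_(j < t.+1) (n j)%:R * jbeta p q j ->
  (d %| n 0)%N.
Proof.
move=> lt_tk /(@jnum_eq_sum n t lt_tk) E.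
have := @dvdn_jnum t.+1 lt_tk; rewrite E big_ord_recl dvdn_addl.
  by rewrite mul1n Gauss_dvdl // (@coprime_qprod t (ltnW lt_tk)).
apply: dvdn_sum => j _; rewrite dvdn_mull // dvdn_mulr // dvdn_jnum // lift0.
exact: ltn_trans (ltn_ord j) lt_tk.
Qed.

End ValueArithmetic.

Theorem corollary7p2 (K : closedFieldType) (HK : [pchar K] =i pred0)
    (p q : nat -> nat) (n : nat -> nat -> nat) (lam : nat -> K) (k : nat) :
  (0 < k)%N ->
  (forall i, (1 <= i <= k)%N -> [/\ (0 < p i)%N, (0 < q i)%N & coprime (p i) (q i)]) ->
  (forall i j, (1 <= j)%N -> (j < i)%N -> (i <= k)%N -> (n i j < q j)%N) ->
  (forall i, (1 <= i <= k)%N ->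
     (q i)%:R * jbeta p q i = \sum_(j < i) (n i j)%:R * jbeta p q j) ->
  forall i a, (2 <= i <= k.+1)%N -> occurs_x_pow (jpoly q n lam i) a ->
  (\big[gcdn/0%N]_(1 <= l < k.+1) p l %| a)%N.
Proof.
move=> _ Hpq _ Hbeta i a /andP[i_gt1 le_ik] [b Tba].
have hi : (1 <= i <= k.+1)%N by rewrite (ltnW i_gt1) le_ik.
set d := \big[gcdn/0%N]_(1 <= l < k.+1) p l.
have dvd_p l : (1 <= l <= k)%N -> (d %| p l)%N.
  by case/andP=> l_gt0 le_lk; apply: biggcdn_nat_dvd; rewrite l_gt0 ltnS.
have q_gt0 l : (1 <= l <= k)%N -> (0 < q l)%N by case/Hpq.
have coprime_q l : (1 <= l <= k)%N -> coprime d (q l).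
  by move=> hl; have [_ _ /(coprime_dvdl (dvd_p l hl))] := Hpq l hl.
have dvd_n0 m : (1 <= m <= k)%N -> (d %| n m 0)%N.
  case: m => // t ht; have lt_tk : (t < k)%N by case/andP: ht.
  exact: (dvdn_x_exponent q_gt0 dvd_p coprime_q (n := n t.+1) lt_tk
                              (Hbeta _ ht)).
have /polyOverP/(_ b)/poly_in_XnP Ti := jpoly_polyOver_in_Xn q lam dvd_n0 hi.
by apply: contraR Tba => nda; rewrite Ti.
Qed.
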